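(* Let $\mathbf{k}$ be algebraically closed of characteristic $2$, $V$ a $2n$-dimensional $\mathbf{k}$-vector space with nondegenerate symplectic form $\langle,\rangle$, $G=Sp(V)$, $\mathfrak g=\mathfrak{sp}(V)$. Let $\mathcal F^G$ be the set of complete flags $0=V_0\subset V_1\subset\dots\subset V_{2n}=V$ with $V_{2n-i}=V_i^\perp$ and $\langle,\rangle|_{V_i}=0$ for $i\le n$; it is identified with the variety of Borel subgroups of $G$ by sending a flag to its stabilizer $B$. Then for $\xi\in\mathcal N_{\mathfrak g^*}$ and a flag $F=(V_i)\in\mathcal F^G$ with stabilizer $B$ (Lie algebra $\mathfrak b$), we have $\xi(\mathfrak b)=0$ if and only if $\beta_\xi(V_i,V_{2n+1-i})=0$ and $\alpha_\xi(V_i)=0$ for all $i\le n$. Thus the Springer fiber $\mathcal B^G_\xi$ is identified with $\mathcal F^G_\xi=\{F\in\mathcal F^G:\beta_\xi(V_i,V_{2n+1-i})=0,\ \alpha_\xi(V_i)=0\ \forall i\le n\}$.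
   Context: For $\xi\in\mathfrak g^*$ choose $X\in\mathfrak{gl}(V)$ with $\xi(x)=\mathrm{tr}(Xx)$ for all $x\in\mathfrak g$; $\alpha_\xi(v)=\langle v,Xv\rangle$ is a well-defined quadratic form on $V$, and $\beta_\xi(v,w)=\alpha_\xi(v+w)-\alpha_\xi(v)-\alpha_\xi(w)$. $\mathcal N_{\mathfrak g^*}$ is the set of $\xi\in\mathfrak g^*$ vanishing on the Lie algebra of some Borel subgroup; the Springer fiber $\mathcal B^G_\xi$ is the set of Borel subgroups $B$ with $\xi(\mathrm{Lie}\,B)=0$. *)

(* V = k^(2n) as row vectors; linear maps act on the right (v *m A);
   subspaces of V are row spaces of square matrices, membership (u <= A)%MS. *)
From HB Require Import structures.
From mathcomp Require Import all_boot all_order all_algebra.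
Set Implicit Arguments. Unset Strict Implicit. Unset Printing Implicit Defensive.
Import GRing.Theory.
Local Open Scope ring_scope.

Definition bform (k : fieldType) (m : nat) (J : 'M[k]_m) (u v : 'rV[k]_m) : k :=
  (u *m J *m v^T) 0 0.

Definition symplectic_form (k : fieldType) (m : nat) (J : 'M[k]_m) : Prop :=
  (forall u, bform J u u = 0) /\
  (forall u, (forall v, bform J u v = 0) -> u = 0).

Definition in_sp (k : fieldType) (m : nat) (J : 'M[k]_m) (x : 'M[k]_m) : Prop :=
  forall u v, bform J (u *m x) v + bform J u (v *m x) = 0.

(* complete flag V_0 ⊂ V_1 ⊂ ... ⊂ V_m, dim V_i = i (only indices i <= m matter) *)
Definition complete_flag (k : fieldType) (m : nat) (F : nat -> 'M[k]_m) : Prop :=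
  (forall i, i <= m -> \rank (F i) = i)%N /\
  (forall i, i < m -> (F i <= F i.+1)%MS)%N.

Definition in_FG (k : fieldType) (n : nat) (J : 'M[k]_(n.*2))
    (F : nat -> 'M[k]_(n.*2)) : Prop :=
  complete_flag F /\
  (forall i, (i <= n.*2)%N -> forall w : 'rV[k]_(n.*2),
      (w <= F (n.*2 - i)%N)%MS <-> (forall v, (v <= F i)%MS -> bform J v w = 0)) /\
  (forall i, (i <= n)%N -> forall u v, (u <= F i)%MS -> (v <= F i)%MS -> bform J u v = 0).

(* Lie algebra b of the stabilizer B in Sp(V) of the flag F
   (B is smooth, so Lie B = {x in sp(V) | x V_i ⊆ V_i for all i}) *)
Definition in_borel_lie (k : fieldType) (n : nat) (J : 'M[k]_(n.*2))
    (F : nat -> 'M[k]_(n.*2)) (x : 'M[k]_(n.*2)) : Prop :=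
  in_sp J x /\ (forall i, (i <= n.*2)%N -> (F i *m x <= F i)%MS).

(* xi (a functional on g, only its values on g matter) vanishes on Lie B_F *)
Definition vanishes_on_borel (k : fieldType) (n : nat) (J : 'M[k]_(n.*2))
    (xi : 'M[k]_(n.*2) -> k) (F : nat -> 'M[k]_(n.*2)) : Prop :=
  forall x, in_borel_lie J F x -> xi x = 0.

Definition in_nilp_cone (k : fieldType) (n : nat) (J : 'M[k]_(n.*2))
    (xi : 'M[k]_(n.*2) -> k) : Prop :=
  exists F, in_FG J F /\ vanishes_on_borel J xi F.

Definition alpha (k : fieldType) (m : nat) (J X : 'M[k]_m) (v : 'rV[k]_m) : k :=
  bform J v (v *m X).
Definition beta (k : fieldType) (m : nat) (J X : 'M[k]_m) (v w : 'rV[k]_m) : k :=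
  alpha J X (v + w) - alpha J X v - alpha J X w.

From HB Require Import structures.
From mathcomp Require Import all_boot all_order all_algebra.
From mathcomp Require Import ring zify.
Set Implicit Arguments. Unset Strict Implicit. Unset Printing Implicit Defensive.
Import GRing.Theory.
Local Open Scope ring_scope.

(* For u, v in V let [transvec u v] be the rank-one map y |-> <y,u> v.  If u lies
   in an isotropic V_i, then [transvec u u] and [transvec u v + transvec v u]
   (v in V_(2n+1-i)) lie in b, and xi takes the values -alpha(u) and -beta(u,v)
   on them; this gives the forward implication.
   Conversely, pick a basis (e_a) adapted to the flag (e_a in V_(a+1) \ V_a) and
   its dual basis (f_c) with respect to <,>.  An x in b is determined by the
   matrix T_cd = -<f_c x, f_d>, which is symmetric (x is in sp(V)) and vanishes
   for c + d >= 2n (x stabilises the flag), and xi(x) = sum_(a,b) A_ab T_ba with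
   A_ab = <e_a X, e_b>.  Since A_aa = -alpha(e_a) and A_ab + A_ba = -beta(e_a,e_b),
   the conditions on alpha and beta kill every diagonal term and every pair of
   symmetric off-diagonal terms of this sum. *)

Section BilinearForm.
Variables (k : fieldType) (m : nat) (J : 'M[k]_m).

Lemma bformDl u v w : bform J (u + v) w = bform J u w + bform J v w.
Proof. by rewrite /bform !mulmxDl mxE. Qed.

Lemma bformDr u v w : bform J w (u + v) = bform J w u + bform J w v.
Proof. by rewrite /bform linearD /= mulmxDr mxE. Qed.

Lemma bformZl c u w : bform J (c *: u) w = c * bform J u w.
Proof. by rewrite /bform -!scalemxAl mxE. Qed.

Lemma bformZr c u w : bform J w (c *: u) = c * bform J w u.
Proof. by rewrite /bform linearZ /= -scalemxAr mxE. Qed.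

Lemma betaE (X : 'M[k]_m) u v :
  beta J X u v = bform J u (v *m X) + bform J v (u *m X).
Proof. by rewrite /beta /alpha !mulmxDl !bformDl !bformDr; ring. Qed.

Lemma delta_mx_bilinE (A : 'M[k]_m) (i j : 'I_m) :
  (delta_mx 0 i *m A *m (delta_mx 0 j)^T : 'M[k]_1) 0 0 = A i j.
Proof. by rewrite trmx_delta -mulmxA -colE -rowE !mxE. Qed.

Lemma mulmx_trmx_rowsE (A M B : 'M[k]_m) a b :
  (A *m M *m B^T) a b = (row a A *m M *m (row b B)^T : 'M[k]_1) 0 0.
Proof. by rewrite -(delta_mx_bilinE (A *m M *m B^T) a b) !rowE trmx_mul !mulmxA. Qed.

Definition transvec (u v : 'rV[k]_m) : 'M[k]_m := J *m u^T *m v.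

Lemma mul_transvec y u v : y *m transvec u v = bform J y u *: v.
Proof. by rewrite /transvec !mulmxA [y *m J *m u^T]mx11_scalar mul_scalar_mx. Qed.

Lemma mxtrace_mul_transvec (X : 'M[k]_m) u v :
  \tr (X *m transvec u v) = (v *m X *m J *m u^T : 'M[k]_1) 0 0.
Proof. by rewrite /transvec !mulmxA mxtrace_mulC !mulmxA /mxtrace big_ord1. Qed.

Hypothesis J_alt : forall u, bform J u u = 0.

Lemma bform_alt_skew u v : bform J v u = - bform J u v.
Proof.
apply/eqP; rewrite -addr_eq0 addrC.
by have := J_alt (u + v); rewrite bformDl !bformDr !J_alt add0r addr0 => ->.
Qed.

Lemma trmx_alt : J^T = - J.
Proof.
apply/matrixP => i j; rewrite !mxE -!delta_mx_bilinE.
exact: bform_alt_skew.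
Qed.

Lemma bform_mulmxr (X : 'M[k]_m) u w :
  bform J u (w *m X) = - (w *m X *m J *m u^T : 'M[k]_1) 0 0.
Proof.
transitivity ((u *m J *m (w *m X)^T)^T 0 0); first by rewrite [RHS]mxE.
rewrite !trmx_mul !trmxK trmx_alt.
by rewrite mulNmx mulmxN mulmxA mxE.
Qed.

Lemma in_sp_transvec u : in_sp J (transvec u u).
Proof.
move=> y z; rewrite !mul_transvec bformZl bformZr (bform_alt_skew u z).
by rewrite mulNr mulrC addrN.
Qed.

Lemma in_sp_transvec_sym u v : in_sp J (transvec u v + transvec v u).
Proof.
move=> y z; rewrite !mulmxDr !mul_transvec !bformDl !bformDr !bformZl !bformZr.
by rewrite (bform_alt_skew u z) (bform_alt_skew v z); ring.
Qed.

End BilinearForm.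

Lemma symplectic_form_unit (k : fieldType) m (J : 'M[k]_m) :
  symplectic_form J -> J \in unitmx.
Proof.
case=> _ nondeg; rewrite -row_free_unit -kermx_eq0; apply/eqP/row_matrixP => i.
by rewrite row0; apply: nondeg => v; rewrite /bform -row_mul mulmx_ker row0 !mul0mx mxE.
Qed.

Lemma stablemx_rowP (k : fieldType) m (A x : 'M[k]_m) :
  (forall y : 'rV[k]_m, (y <= A)%MS -> (y *m x <= A)%MS) -> (A *m x <= A)%MS.
Proof. by move=> Ax; apply/row_subP => r; rewrite row_mul Ax ?row_sub. Qed.

Lemma sum_alternating (R : zmodType) m (h : 'I_m -> 'I_m -> R) :
  (forall a, h a a = 0) -> (forall a b : 'I_m, (a < b)%N -> h a b + h b a = 0) ->
  \sum_a \sum_b h a b = 0.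
Proof.
move=> h_diag h_pair.
have split_row a : \sum_b h a b =
    \sum_(b : 'I_m | (a < b)%N) h a b + \sum_(b : 'I_m | (b < a)%N) h a b.
  rewrite (bigD1 a) //= h_diag add0r (bigID (fun b : 'I_m => (a < b)%N)) /=.
  congr (_ + _); apply: eq_bigl => b.
    by rewrite andb_idl // => ab; rewrite -val_eqE gtn_eqF.
  by rewrite -leqNgt ltn_neqAle val_eqE.
rewrite (eq_bigr _ (fun a _ => split_row a)) big_split /=.
rewrite (exchange_big_dep predT) //= -big_split /=.
by rewrite big1 // => a _; rewrite -big_split big1 // => b /h_pair.
Qed.

Section CompleteFlag.
Variables (k : fieldType) (m : nat) (F : nat -> 'M[k]_m).
Hypothesis flagF : complete_flag F.

Lemma flag_sub i j : (i <= j)%N -> (j <= m)%N -> (F i <= F j)%MS.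
Proof.
elim: j => [|j IH] ij jm; first by rewrite leqn0 in ij; rewrite (eqP ij).
case: (ltngtP i j.+1) ij => // [ij|<-] _; last exact: submx_refl.
exact: submx_trans (IH ij (ltnW jm)) (flagF.2 j jm).
Qed.

(* A row of F (a+1) outside F a; the fallback index of [odflt] is never used. *)
Definition flag_vec (a : 'I_m) : 'rV[k]_m :=
  row (odflt a [pick r | ~~ (row r (F a.+1) <= F a)%MS]) (F a.+1).

Lemma flag_vec_sub a : (flag_vec a <= F a.+1)%MS.
Proof. exact: row_sub. Qed.

Lemma flag_vec_notin a : ~~ (flag_vec a <= F a)%MS.
Proof.
rewrite /flag_vec; case: pickP => [r //|none] /=.
have: (F a.+1 <= F a)%MS by apply/row_subP => r; have := none r; rewrite /= => /negbFE.
by move/mxrankS; rewrite !flagF.1 ?ltnn // ltnW.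
Qed.

Definition flag_basis : 'M[k]_m := \matrix_(a < m) flag_vec a.

Lemma row_pid_flag_basis i (a : 'I_m) :
  (a < i)%N -> row a ((pid_mx i : 'M[k]_m) *m flag_basis) = flag_vec a.
Proof.
move=> ai; rewrite row_mul -[RHS](rowK flag_vec a) [row a flag_basis]rowE.
by congr (_ *m _); apply/rowP => j; rewrite !mxE ai andbT eqxx /= eq_sym.
Qed.

Lemma flag_sub_basis i : (i <= m)%N -> (F i <= (pid_mx i : 'M[k]_m) *m flag_basis)%MS.
Proof.
elim: i => [|i IH] im.
  by have /eqP := flagF.1 0 (leq0n _); rewrite mxrank_eq0 => /eqP ->; exact: sub0mx.
pose a := Ordinal im.
have S_sub : (F i + flag_vec a <= F i.+1)%MS.
  by rewrite addsmx_sub flag_vec_sub (flagF.2 i im).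
have F_ltS : (F i < F i + flag_vec a)%MS.
  rewrite ltmxE addsmxSl /=; apply: contra (flag_vec_notin a).
  exact: submx_trans (addsmxSr _ _).
have /andP[_ F_subS] : (F i + flag_vec a == F i.+1)%MS.
  rewrite -(geq_leqif (mxrank_leqif_eq S_sub)) flagF.1 //.
  by move: F_ltS; rewrite ltmxErank => /andP[_]; rewrite flagF.1 // ltnW.
apply: submx_trans F_subS _; rewrite addsmx_sub; apply/andP; split.
  apply: submx_trans (IH (ltnW im)) _.
  have -> : (pid_mx i : 'M[k]_m) = pid_mx i *m (pid_mx i.+1 : 'M[k]_m).
    by rewrite mul_pid_mx (minn_idPl (leqnSn i)) (minn_idPr (ltnW im)).
  by rewrite -mulmxA submxMl.
by rewrite -(row_pid_flag_basis (i := i.+1) (a := a)) ?row_sub.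
Qed.

Lemma flag_basis_unit : flag_basis \in unitmx.
Proof.
rewrite -row_full_unit /row_full eqn_leq rank_leq_col /=.
by rewrite -{1}(flagF.1 m (leqnn m)) mxrankS // -[flag_basis]mul1mx -pid_mx_1 flag_sub_basis.
Qed.

End CompleteFlag.

Section IsotropicFlag.
Variables (k : fieldType) (n : nat) (J X : 'M[k]_(n.*2)) (F : nat -> 'M[k]_(n.*2)).
Hypotheses (sympJ : symplectic_form J) (FG_F : in_FG J F).

Local Notation m := n.*2.
Local Notation P := (flag_basis F).
Let J_alt := sympJ.1.
Let flagF := FG_F.1.
Let flag_perp := FG_F.2.1.
Let flag_iso := FG_F.2.2.

(* The rows of [dual_flag_basis] form the basis dual to [flag_basis] up to sign:
   <e_a, f_c> = - delta_ac. *)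
Definition dual_flag_basis : 'M[k]_m := invmx (J *m P^T).
Local Notation Q := dual_flag_basis.

Lemma flag_basis_gram_unit : J *m P^T \in unitmx.
Proof. by rewrite unitmx_mul unitmx_tr symplectic_form_unit // flag_basis_unit. Qed.

Lemma flag_basis_dual : P *m J *m Q^T = -1.
Proof.
have := congr1 trmx (mulVmx flag_basis_gram_unit).
rewrite trmx_mul trmx1 trmx_mul trmxK (trmx_alt J_alt) mulmxN mulNmx.
by move/eqP; rewrite eqr_oppLR => /eqP.
Qed.

Lemma dual_flag_basis_gram : J *m (Q^T *m P) = -1.
Proof.
have : P *m (- (J *m Q^T)) = 1 by rewrite mulmxN mulmxA flag_basis_dual opprK.
by move/mulmx1C; rewrite mulNmx mulmxA => /eqP; rewrite eqr_oppLR => /eqP.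
Qed.

Lemma bform_dual_flag_basis (c : nat) (d : 'I_m) y :
  (c <= d)%N -> (y <= F c)%MS -> bform J y (row d Q) = 0.
Proof.
move=> cd yF; have cm : (c <= m)%N by apply: leq_trans cd (ltnW (ltn_ord d)).
have /submxP[z ->] := submx_trans yF (flag_sub_basis flagF cm).
rewrite /bform tr_row colE !mulmxA.
have -> : z *m pid_mx c *m P *m J *m Q^T = - (z *m pid_mx c).
  by rewrite -!mulmxA [P *m _]mulmxA flag_basis_dual mulmxN mulmx1 mulmxN.
rewrite -colE !mxE big1 ?oppr0 // => j _; rewrite !mxE.
by case: eqP => [/= ->|]; rewrite ?ltnNge ?cd mulr0.
Qed.

Lemma dual_flag_basis_sub (c : 'I_m) : (row c Q <= F (m - c))%MS.
Proof.
by apply/(flag_perp (ltnW (ltn_ord c))) => v vF; exact: bform_dual_flag_basis vF.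
Qed.

(* The coordinates of x in the basis (transvec e_c e_d) of End(V). *)
Definition borel_coord (x : 'M[k]_m) : 'M[k]_m := - (Q *m x *m J *m Q^T).

Lemma borel_coordK x : x = J *m P^T *m borel_coord x *m P.
Proof.
rewrite /borel_coord mulmxN mulNmx !mulmxA (mulmxV flag_basis_gram_unit) mul1mx.
by rewrite -!mulmxA dual_flag_basis_gram mulmxN mulmx1 opprK.
Qed.

Lemma borel_coordE x c d : borel_coord x c d = - bform J (row c Q *m x) (row d Q).
Proof. by rewrite /borel_coord mxE mulmx_trmx_rowsE /bform row_mul. Qed.

Lemma borel_coordC x c d : in_sp J x -> borel_coord x c d = borel_coord x d c.
Proof.
move=> sp_x; rewrite !borel_coordE; congr (- _).
by have /eqP := sp_x (row c Q) (row d Q); rewrite addr_eq0 => /eqP ->; rewrite -bform_alt_skew.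
Qed.

Lemma borel_coord_antidiag x (c d : 'I_m) :
  in_borel_lie J F x -> (m <= c + d)%N -> borel_coord x c d = 0.
Proof.
case=> _ x_stab cd; rewrite borel_coordE.
have fx_sub : (row c Q *m x <= F d)%MS.
  apply: submx_trans (submxMr x (dual_flag_basis_sub c)) _.
  apply: submx_trans (x_stab _ (leq_subr _ _)) (flag_sub flagF _ (ltnW (ltn_ord d))).
  by lia.
by rewrite (bform_dual_flag_basis (leqnn d) fx_sub) oppr0.
Qed.

Definition flag_gram : 'M[k]_m := P *m X *m J *m P^T.

Lemma flag_gramE a b :
  flag_gram a b = (flag_vec F a *m X *m J *m (flag_vec F b)^T : 'M[k]_1) 0 0.
Proof. by rewrite /flag_gram mulmx_trmx_rowsE row_mul !rowK. Qed.

Lemma flag_gram_diag a : flag_gram a a = - alpha J X (flag_vec F a).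
Proof. by rewrite /alpha (bform_mulmxr J_alt) opprK flag_gramE. Qed.

Lemma flag_gram_sym a b :
  flag_gram a b + flag_gram b a = - beta J X (flag_vec F a) (flag_vec F b).
Proof. by rewrite betaE !(bform_mulmxr J_alt) !flag_gramE; ring. Qed.

Lemma mxtrace_borel x :
  \tr (X *m x) = \sum_a \sum_b flag_gram a b * borel_coord x b a.
Proof.
rewrite [in LHS](borel_coordK x) !mulmxA mxtrace_mulC !mulmxA -/flag_gram.
by apply: eq_bigr => a _; rewrite mxE.
Qed.

Lemma mxtrace_borel_eq0 x :
  in_borel_lie J F x ->
  (forall i, (0 < i <= n)%N ->
     forall u v, (u <= F i)%MS -> (v <= F (m.+1 - i)%N)%MS -> beta J X u v = 0) ->
  (forall i, (i <= n)%N -> forall u, (u <= F i)%MS -> alpha J X u = 0) ->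
  \tr (X *m x) = 0.
Proof.
move=> b_x beta0 alpha0; rewrite mxtrace_borel.
apply: sum_alternating => [a|a b ab].
  have [an|na] := ltnP a n.
    by rewrite flag_gram_diag (alpha0 a.+1 an) ?flag_vec_sub // oppr0 mul0r.
  by rewrite borel_coord_antidiag ?mulr0 //; lia.
rewrite (borel_coordC _ _ b_x.1) -mulrDl flag_gram_sym.
have [abm|mab] := ltnP (a + b) m; last by rewrite borel_coord_antidiag ?mulr0 // addnC.
rewrite (beta0 a.+1) ?oppr0 ?mul0r ?flag_vec_sub //; first by apply/andP; split; lia.
by apply: submx_trans (flag_vec_sub F b) (flag_sub flagF _ _); lia.
Qed.

Lemma transvec_in_borel i u : (i <= n)%N -> (u <= F i)%MS ->
  in_borel_lie J F (transvec J u u).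
Proof.
move=> iN uF; split; first exact: in_sp_transvec.
move=> j jm; apply: stablemx_rowP => y yF; rewrite mul_transvec.
have im : (i <= m)%N by rewrite -addnn; lia.
have [ij|ji] := leqP i j; first by rewrite scalemx_sub // (submx_trans uF) // flag_sub.
rewrite (flag_iso iN (submx_trans yF (flag_sub flagF (ltnW ji) im)) uF) scale0r.
exact: sub0mx.
Qed.

Lemma transvec_sym_in_borel i u v : (0 < i <= n)%N -> (u <= F i)%MS ->
  (v <= F (m.+1 - i))%MS -> in_borel_lie J F (transvec J u v + transvec J v u).
Proof.
move=> /andP[i0 iN] uF vF; split; first exact: in_sp_transvec_sym.
move=> j jm; apply: stablemx_rowP => y yF; rewrite mulmxDr !mul_transvec.
have im : (i <= m)%N by rewrite -addnn; lia.
have [hj|jh] := leqP (m.+1 - i) j.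
  apply: addmx_sub; apply: scalemx_sub; first exact: submx_trans vF (flag_sub flagF hj jm).
  by apply: submx_trans uF (flag_sub flagF _ jm); rewrite -addnn in hj *; lia.
have [ij|ji] := leqP i j.
  have -> : bform J y u = 0.
    rewrite (bform_alt_skew J_alt); apply/eqP; rewrite oppr_eq0; apply/eqP.
    apply: (flag_perp im y).1 => //.
    by apply: submx_trans yF (flag_sub flagF _ _); rewrite -?addnn in jh *; lia.
  by rewrite scale0r add0r scalemx_sub // (submx_trans uF) // flag_sub.
have -> : bform J y v = 0.
  have i1m : (i.-1 <= m)%N by lia.
  apply: (flag_perp i1m v).1; first by have -> : (m - i.-1 = m.+1 - i)%N by lia.
  by apply: submx_trans yF (flag_sub flagF _ _); lia.
rewrite (flag_iso iN (submx_trans yF (flag_sub flagF (ltnW ji) im)) uF) !scale0r addr0.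
exact: sub0mx.
Qed.

Lemma mxtrace_vanishes_on_borelP :
  (forall x, in_borel_lie J F x -> \tr (X *m x) = 0) <->
  (forall i, (0 < i <= n)%N ->
     forall u v, (u <= F i)%MS -> (v <= F (m.+1 - i)%N)%MS -> beta J X u v = 0) /\
  (forall i, (i <= n)%N -> forall u, (u <= F i)%MS -> alpha J X u = 0).
Proof.
split=> [tr0|[beta0 alpha0] x b_x]; last exact: mxtrace_borel_eq0.
split=> [i iN u v uF vF|i iN u uF].
  apply/eqP; rewrite -oppr_eq0 -(tr0 _ (transvec_sym_in_borel iN uF vF)).
  by rewrite mulmxDr mxtraceD !mxtrace_mul_transvec betaE !(bform_mulmxr J_alt) opprD !opprK.
apply/eqP; rewrite -oppr_eq0 -(tr0 _ (transvec_in_borel iN uF)).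
by rewrite mxtrace_mul_transvec /alpha (bform_mulmxr J_alt) opprK.
Qed.

End IsotropicFlag.

Theorem lemma3p2 (k : closedFieldType) (n : nat) (J : 'M[k]_(n.*2))
    (xi : 'M[k]_(n.*2) -> k) (X : 'M[k]_(n.*2)) (F : nat -> 'M[k]_(n.*2)) :
  (2%N \in [pchar k]) ->
  symplectic_form J ->
  (forall x, in_sp J x -> xi x = \tr (X *m x)) ->
  in_nilp_cone J xi ->
  in_FG J F ->
  (vanishes_on_borel J xi F <->
   (forall i, (0 < i <= n)%N ->
      forall u v, (u <= F i)%MS -> (v <= F (n.*2.+1 - i)%N)%MS -> beta J X u v = 0) /\
   (forall i, (i <= n)%N -> forall u, (u <= F i)%MS -> alpha J X u = 0)).
Proof.
move=> _ sympJ xiE _ FG_F; rewrite -(mxtrace_vanishes_on_borelP X sympJ FG_F).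
split=> xi0 x b_x; have := xi0 x b_x; by rewrite xiE //; case: b_x.
Qed.
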